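(* Let $a\in\mathbb{F}$ be such that $\mathbb{F}$ has finite dimension as a right vector space over $K^{\sigma,\delta}_a$. Then for every $r\in\mathbb{Z}_+$ there exists a $(\sigma,\delta)$-multiplicity sequence $\mathbf a=(a_1,\dots,a_r)\in\mathbb{F}^r$ with $a_1=a$.
   Context: Let $\mathbb{F}$ be a division ring, $\sigma$ a ring endomorphism and $\delta$ a $\sigma$-derivation; $\mathbb{F}[x;\sigma,\delta]$ is the skew polynomial ring with $xa=\sigma(a)x+\delta(a)$. $K^{\sigma,\delta}_a=\{\beta\in\mathbb{F}:\sigma(\beta)a+\delta(\beta)=a\beta\}$ is the $(\sigma,\delta)$-centralizer of $a$, a division subring. For $\mathbf a=(a_1,\dots,a_r)$, $P_{\mathbf a}=(x-a_r)\cdots(x-a_1)$; $\mathbf a$ is a $(\sigma,\delta)$-multiplicity sequence if $a_1$ is the only $b\in\mathbb{F}$ such that $x-b$ divides $P_{\mathbf a}$ on the right. *)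

From HB Require Import structures.
From mathcomp Require Import all_boot all_order all_algebra.
Set Implicit Arguments. Unset Strict Implicit. Unset Printing Implicit Defensive.
Import GRing.Theory.
Local Open Scope ring_scope.

(* Skew polynomials F[x; sigma, delta] over a ring F are represented by their
   coefficient lists, i.e. by elements of {poly F} (sum_i p_i x^i, coefficients
   on the LEFT).  Only the additive structure of {poly F} is reused; the skew
   multiplication is defined below from the rule x a = sigma(a) x + delta(a). *)

Section Skew.
Variable F : unitRingType.
Variables (sigma delta : F -> F).

(* left multiplication by x:  x * (sum c_i x^i) = sum (sigma c_i x^(i+1) + delta c_i x^i) *)
Definition skew_mulX (q : {poly F}) : {poly F} :=
  'X * map_poly sigma q + map_poly delta q.

Definition skew_mul (p q : {poly F}) : {poly F} :=
  \sum_(i < size p) (p`_i)%:P * iter i skew_mulX q.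

Definition skew_rdvd (q p : {poly F}) : Prop :=
  exists Q : {poly F}, p = skew_mul Q q.

(* P_a = (x - a_r) ... (x - a_1) for a = [:: a_1; ...; a_r] *)
Definition skew_Pseq (s : seq F) : {poly F} :=
  foldl (fun P b => skew_mul ('X - b%:P) P) 1 s.

Definition multiplicity_seq (s : seq F) : Prop :=
  skew_rdvd ('X - (head 0 s)%:P) (skew_Pseq s) /\
  forall b : F, skew_rdvd ('X - b%:P) (skew_Pseq s) -> b = head 0 s.

Definition sd_centralizer (a beta : F) : Prop :=
  sigma beta * a + delta beta = a * beta.

Definition right_findim_over_centralizer (a : F) : Prop :=
  exists (n : nat) (e : 'I_n -> F),
    forall y : F, exists beta : 'I_n -> F,
      (forall i, sd_centralizer a (beta i)) /\ y = \sum_(i < n) e i * beta i.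
End Skew.

Definition division_ring (F : unitRingType) : Prop :=
  forall x : F, x != 0 -> x \is a GRing.unit.

Definition sigma_derivation (F : unitRingType) (sigma delta : F -> F) : Prop :=
  (forall x y, delta (x + y) = delta x + delta y) /\
  (forall x y, delta (x * y) = sigma x * delta y + delta x * y).

From HB Require Import structures.
From mathcomp Require Import all_boot all_order all_algebra.
From Stdlib Require Import Classical.
Set Implicit Arguments. Unset Strict Implicit. Unset Printing Implicit Defensive.
Import GRing.Theory.
Local Open Scope ring_scope.

(* For b in F let T_b(y) = sigma(y) b + delta(y) be the pseudo-linear map by
   which x acts on F = F[x]/F[x](x - b).  Evaluating p at T_b gives a module
   action (peval_mul), and x - b divides p on the right iff p(T_b)(1) = 0
   (remainder theorem, rdvd_XsubC_peval).  So s is a multiplicity sequence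
   with head a iff a is the only b with P_s(T_b)(1) = 0 (unique_root).

   Induction on the length: P_s(T_a) is right K_a-linear and kills 1; since F
   is finite dimensional over K_a it is not onto (not_surjective_of_kernel, a
   weak rank-nullity proved by Steinitz exchange), so some g is not a value.
   Appending the conjugate a^g = T_a(g) g^-1 keeps a the unique root: a root
   b != a would be a conjugate a^u with P_s(T_a)(u) = g (unique_root_rcons). *)

Section RightSpan.
Variable F : unitRingType.
Hypothesis hF : division_ring F.
Variable K : F -> Prop.
Hypothesis K0 : K 0.
Hypothesis K1 : K 1.
Hypothesis KD : forall x y, K x -> K y -> K (x + y).
Hypothesis KN : forall x, K x -> K (- x).
Hypothesis KM : forall x y, K x -> K y -> K (x * y).
Hypothesis KV : forall x, K x -> x != 0 -> K x^-1.

Lemma KB x y : K x -> K y -> K (x - y).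
Proof. by move=> Kx Ky; apply: KD => //; apply: KN. Qed.

Lemma Ksum n (f : 'I_n -> F) : (forall i, K (f i)) -> K (\sum_i f i).
Proof. by move=> Kf; apply: (big_ind K) => // i _. Qed.

Definition in_span n (e : 'I_n -> F) (y : F) : Prop :=
  exists b : 'I_n -> F, (forall i, K (b i)) /\ y = \sum_i e i * b i.

Definition spans n (e : 'I_n -> F) : Prop := forall y, in_span e y.

Lemma pivot_in_span n m (e : 'I_n.+1 -> F) (v : 'I_m.+1 -> F)
    (g : 'I_m.+1 -> 'I_n.+1 -> F) (j0 : 'I_m.+1) :
  (forall j i, K (g j i)) -> (forall j, v j = \sum_i e i * g j i) ->
  g j0 ord_max != 0 -> forall k : 'I_m,
  in_span (e \o widen_ord (leqnSn n))
    (v (lift j0 k) - v j0 * ((g j0 ord_max)^-1 * g (lift j0 k) ord_max)).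
Proof.
move=> Kg hv hc k; set c := g j0 ord_max; set t := c^-1 * _.
have Kt : K t by apply: KM; [exact: KV (Kg _ _) hc|exact: Kg].
exists (fun i => g (lift j0 k) (widen_ord (leqnSn n) i)
                 - g j0 (widen_ord (leqnSn n) i) * t); split.
  by move=> i; apply: KB; [|apply: KM].
rewrite !hv !big_ord_recr /= mulrDl -/c [e ord_max * c * _]mulrA /t.
rewrite (mulrK (hF hc)) opprD addrACA subrr addr0 mulr_suml -sumrB.
by apply: eq_bigr => i _; rewrite mulrBr !mulrA.
Qed.

Lemma steinitz n : forall m (e : 'I_n -> F) (v : 'I_m -> F), (n < m)%N ->
  (forall j, in_span e (v j)) ->
  exists b : 'I_m -> F, (forall j, K (b j)) /\ (exists j, b j != 0) /\
    \sum_j v j * b j = 0.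
Proof.
elim: n => [|n IH] m e v ltnm hv.
  exists (fun _ => 1); split=> //; split; first by exists (Ordinal ltnm); exact: oner_neq0.
  by apply: big1 => j _; have [b [_ ->]] := hv j; rewrite big_ord0 mul0r.
have [g hg] := fin_all_exists hv.
have Kg j i : K (g j i) by case: (hg j).
have hvg j : v j = \sum_i e i * g j i by case: (hg j).
have [/existsP[j0 hj0]|/existsPn lastg0] := boolP [exists j, g j ord_max != 0];
    last first.
  apply: (IH m (e \o widen_ord (leqnSn n)) v (ltnW ltnm)) => j.
  exists (fun i => g j (widen_ord (leqnSn n) i)); split=> //.
  by rewrite hvg big_ord_recr /= (eqP (negPn (lastg0 j))) mulr0 addr0.
case: m ltnm v hv g hg Kg hvg j0 hj0 => // m ltnm v _ g _ Kg hvg j0 hj0.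
set t := fun k : 'I_m => (g j0 ord_max)^-1 * g (lift j0 k) ord_max.
have [b [Kb [[k bk] dep]]] :=
  IH m _ _ ltnm (pivot_in_span Kg hvg hj0).
exists (fun j => if unlift j0 j is Some k then b k else - \sum_k t k * b k).
split.
  move=> j; case: (unlift j0 j) => [k'|]; first exact: Kb.
  by apply/KN/Ksum => k'; apply: KM => //; apply: KM; [apply: KV|].
split; first by exists (lift j0 k); rewrite liftK.
rewrite (bigD1_ord j0) //= unlift_none.
under [X in _ + X]eq_bigr => i _ do rewrite liftK.
rewrite -[RHS]dep; under [RHS]eq_bigr => k' _ do rewrite mulrBl.
rewrite sumrB mulrN mulr_sumr addrC; congr (_ - _).
by apply: eq_bigr => k' _; rewrite !mulrA.
Qed.

Lemma spans_drop n (e : 'I_n.+1 -> F) (b : 'I_n.+1 -> F) j0 :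
  spans e -> (forall j, K (b j)) -> b j0 != 0 -> \sum_j e j * b j = 0 ->
  spans (e \o lift j0).
Proof.
move=> hsp Kb bj0 dep y.
set S := \sum_(k < n) e (lift j0 k) * b (lift j0 k).
have ej0 : e j0 = - S * (b j0)^-1.
  move: dep; rewrite (bigD1_ord j0) //= -/S => /eqP; rewrite addr_eq0 => /eqP <-.
  by rewrite mulrK // hF.
have [g [Kg ->]] := hsp y.
exists (fun k => g (lift j0 k) - b (lift j0 k) * ((b j0)^-1 * g j0)); split.
  by move=> k; apply: KB => //; apply: KM => //; apply: KM => //; apply: KV.
rewrite (bigD1_ord j0) //= ej0 /S !mulNr !mulr_suml -sumrN -big_split /=.
by apply: eq_bigr => k _; rewrite mulrBr addrC !mulrA.
Qed.

Lemma not_surjective_of_kernel n (e : 'I_n -> F) (L : F -> F) :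
  spans e ->
  (forall x y, L (x + y) = L x + L y) ->
  (forall x b, K b -> L (x * b) = L x * b) ->
  L 1 = 0 -> ~ (forall g, exists d, L d = g).
Proof.
move=> + LD LK L1 surj.
have L0 : L 0 = 0 by apply: (addrI (L 0)); rewrite -LD !addr0.
elim: n e => [|n IH] e hsp.
  have [b [_ /eqP]] := hsp 1; by rewrite big_ord0 oner_eq0.
have [f hf] := fin_all_exists (fun i => surj (e i)).
(* the n+2 vectors 1, f_0, ..., f_n are dependent; applying L gives a relation on e *)
pose v (j : 'I_n.+2) := if unlift ord0 j is Some i then f i else 1.
have [b [Kb [[j bj] dep]]] := steinitz (ltnSn n.+1) (fun j => hsp (v j)).
have depL : \sum_i e i * b (lift ord0 i) = 0.
  have := congr1 L dep; rewrite L0 (big_morph L LD L0).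
  rewrite (bigD1_ord ord0) //= LK // /v unlift_none L1 mul0r add0r.
  by under eq_bigr => i _ do rewrite liftK LK // hf.
have [/existsP[i bi]|/existsPn b0] := boolP [exists i, b (lift ord0 i) != 0].
  exact: (IH _ (spans_drop hsp (fun i => Kb (lift ord0 i)) bi depL)).
have {}b0 i : b (lift ord0 i) = 0 by apply/eqP/negPn/b0.
move: dep; rewrite (bigD1_ord ord0) //= /v unlift_none mul1r big1 ?addr0 => [b00|i _].
  by case: (unliftP ord0 j) bj => [i ->|->]; rewrite ?b0 ?b00 eqxx.
by rewrite b0 mulr0.
Qed.
End RightSpan.

Section SkewPolynomials.
Variable F : unitRingType.
Variable sigma : {rmorphism F -> F}.
Variable delta : F -> F.
Hypothesis deltaD : forall x y, delta (x + y) = delta x + delta y.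
Hypothesis deltaM : forall x y, delta (x * y) = sigma x * delta y + delta x * y.

Local Notation smul := (skew_mul sigma delta).
Local Notation smulX := (skew_mulX sigma delta).

Lemma delta0 : delta 0 = 0.
Proof. by apply: (addrI (delta 0)); rewrite -deltaD !addr0. Qed.

Lemma delta1 : delta 1 = 0.
Proof.
have := deltaM 1 1; rewrite mulr1 rmorph1 mul1r mulr1 => d11.
by apply: (addrI (delta 1)); rewrite addr0 -d11.
Qed.

(* The pseudo-linear map T_b(y) = sigma(y) b + delta(y): since
   x y = sigma(y) x + delta(y), it is multiplication by x on F[x]/F[x](x - b). *)
Definition pl (b y : F) : F := sigma y * b + delta y.

Lemma plD b y z : pl b (y + z) = pl b y + pl b z.
Proof. by rewrite /pl rmorphD deltaD mulrDl addrACA. Qed.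

Lemma pl0 b : pl b 0 = 0.
Proof. by rewrite /pl rmorph0 mul0r delta0 addr0. Qed.

Lemma plM b c y : pl b (c * y) = sigma c * pl b y + delta c * y.
Proof. by rewrite /pl rmorphM deltaM mulrDr !mulrA addrA. Qed.

Lemma pl1 b : pl b 1 = b.
Proof. by rewrite /pl rmorph1 mul1r delta1 addr0. Qed.

Lemma iter_pl0 b i : iter i (pl b) 0 = 0.
Proof. by elim: i => //= i ->; rewrite pl0. Qed.

Lemma iter_plD b i y z : iter i (pl b) (y + z) = iter i (pl b) y + iter i (pl b) z.
Proof. by elim: i => //= i ->; rewrite plD. Qed.

(* Evaluation of a skew polynomial at T_b: peval b p y = sum_i p_i T_b^i(y).
   By the remainder theorem below, peval b p 1 is the remainder of p mod x - b. *)
Definition peval (b : F) (p : {poly F}) (y : F) : F :=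
  \sum_(i < size p) p`_i * iter i (pl b) y.

Lemma peval_widen b (p : {poly F}) y n : (size p <= n)%N ->
  peval b p y = \sum_(i < n) p`_i * iter i (pl b) y.
Proof.
move=> szp; rewrite /peval (big_ord_widen n (fun i => p`_i * iter i (pl b) y) szp).
by rewrite big_mkcond; apply: eq_bigr => i _; case: ltnP => // ?; rewrite nth_default ?mul0r.
Qed.

Lemma pevalD b p q y : peval b (p + q) y = peval b p y + peval b q y.
Proof.
set n := maxn (size p) (size q).
rewrite (@peval_widen b _ _ n) ?(leq_trans (size_polyD _ _)) //.
rewrite (@peval_widen b p _ n) ?leq_maxl // (@peval_widen b q _ n) ?leq_maxr //.
by rewrite -big_split; apply: eq_bigr => i _; rewrite coefD mulrDl.
Qed.

Lemma peval0 b y : peval b 0 y = 0.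
Proof. by rewrite /peval size_poly0 big_ord0. Qed.

Lemma pevalN b p y : peval b (- p) y = - peval b p y.
Proof. by apply: (addrI (peval b p y)); rewrite -pevalD !subrr peval0. Qed.

Lemma pevalC b c y : peval b c%:P y = c * y.
Proof. by rewrite (@peval_widen b _ _ 1) ?size_polyC_leq1 // big_ord1 coefC. Qed.

Lemma pevalX b y : peval b 'X y = pl b y.
Proof.
rewrite (@peval_widen b _ _ 2) ?size_polyX // big_ord_recr big_ord1 /= !coefX /=.
by rewrite mul0r add0r mul1r.
Qed.

Lemma pevalXsubC b c y : peval b ('X - c%:P) y = pl b y - c * y.
Proof. by rewrite pevalD pevalN pevalX pevalC. Qed.

Lemma pevalCM b c p y : peval b (c%:P * p) y = c * peval b p y.
Proof.
rewrite (@peval_widen b _ _ (size p)); last first.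
  by apply/leq_sizeP => j hj; rewrite coefCM nth_default // mulr0.
by rewrite /peval mulr_sumr; apply: eq_bigr => i _; rewrite coefCM mulrA.
Qed.

Lemma peval_y0 b p : peval b p 0 = 0.
Proof. by rewrite /peval big1 // => i _; rewrite iter_pl0 mulr0. Qed.

Lemma peval_yD b p y z : peval b p (y + z) = peval b p y + peval b p z.
Proof. by rewrite /peval -big_split; apply: eq_bigr => i _; rewrite iter_plD mulrDr. Qed.

Lemma coef_skew_mulX (q : {poly F}) i :
  (smulX q)`_i = (if i == 0%N then 0 else sigma q`_i.-1) + delta q`_i.
Proof. by rewrite /skew_mulX coefD coefXM coef_map coef_map_id0 ?delta0. Qed.

Lemma peval_mulX b q y : peval b (smulX q) y = pl b (peval b q y).
Proof.
set n := size q.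
rewrite (@peval_widen b _ _ n.+1); last first.
  apply/leq_sizeP => j hj; rewrite coef_skew_mulX.
  rewrite [q`_j]nth_default ?delta0 ?addr0 ?(ltnW hj) //; case: j hj => // j hj /=.
  by rewrite nth_default ?rmorph0.
rewrite /peval (big_morph (pl b) (plD b) (pl0 b)).
under [LHS]eq_bigr => i _ do rewrite coef_skew_mulX mulrDl.
rewrite big_split /= big_ord_recl /= mul0r add0r big_ord_recr /= nth_default //.
by rewrite delta0 mul0r addr0 -big_split; apply: eq_bigr => i _; rewrite plM.
Qed.

Lemma peval_mul b p q y : peval b (smul p q) y = peval b p (peval b q y).
Proof.
have peval_iter i : peval b (iter i smulX q) y = iter i (pl b) (peval b q y).
  by elim: i => //= i IH; rewrite peval_mulX IH.
rewrite /skew_mul (big_morph (fun p => peval b p y) (fun p q => pevalD b p q y)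
  (peval0 b y)).
by apply: eq_bigr => i _; rewrite pevalCM peval_iter.
Qed.

Lemma smul_widen (p q : {poly F}) n : (size p <= n)%N ->
  smul p q = \sum_(i < n) (p`_i)%:P * iter i smulX q.
Proof.
move=> szp; rewrite /skew_mul (big_ord_widen n (fun i => (p`_i)%:P * iter i smulX q) szp).
by rewrite big_mkcond; apply: eq_bigr => i _; case: ltnP => // ?; rewrite nth_default ?mul0r.
Qed.

Lemma smulDl p q r : smul (p + q) r = smul p r + smul q r.
Proof.
set n := maxn (size p) (size q).
rewrite (@smul_widen _ _ n) ?(leq_trans (size_polyD _ _)) //.
rewrite (@smul_widen p _ n) ?leq_maxl // (@smul_widen q _ n) ?leq_maxr //.
by rewrite -big_split; apply: eq_bigr => i _; rewrite coefD polyCD mulrDl.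
Qed.

Lemma smul0 r : smul 0 r = 0.
Proof. by rewrite /skew_mul size_poly0 big_ord0. Qed.

Lemma smul_monomial c k r : smul (c%:P * 'X^k) r = c%:P * iter k smulX r.
Proof.
rewrite (@smul_widen _ _ k.+1); last first.
  apply/leq_sizeP => j hj; rewrite coefCM coefXn.
  by case: eqP hj => [->|]; rewrite ?ltnn ?mulr0.
rewrite big_ord_recr /= coefCM coefXn eqxx mulr1 big1 ?add0r // => i _.
by rewrite coefCM coefXn (ltn_eqF (ltn_ord i)) mulr0 mul0r.
Qed.

Lemma iter_smulX_monic (r : {poly F}) m k : (size r <= m.+1)%N -> r`_m = 1 ->
  (size (iter k smulX r) <= (m + k).+1)%N /\ (iter k smulX r)`_(m + k) = 1.
Proof.
move=> szr rm; elim: k => [|k [IHs IHc]] /=; first by rewrite addn0.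
rewrite addnS; split; last by rewrite coef_skew_mulX /= IHc rmorph1 nth_default ?delta0 ?addr0.
apply/leq_sizeP => -[|j] // hj; rewrite coef_skew_mulX /=.
by rewrite !nth_default ?rmorph0 ?delta0 ?addr0 // (leq_trans IHs) // ltnW.
Qed.

Lemma skew_div_XsubC b n : forall p : {poly F}, (size p <= n.+1)%N ->
  exists Q c, p = smul Q ('X - b%:P) + c%:P.
Proof.
elim: n => [|n IH] p szp; first by exists 0, p`_0; rewrite smul0 add0r; exact: size1_polyC.
set c := p`_n.+1.
have lcX1 : ('X - b%:P)`_1 = 1 by rewrite coefB coefX coefC subr0.
have [szX lcX] := @iter_smulX_monic ('X - b%:P) 1 n (eq_leq (size_XsubC b)) lcX1.
rewrite add1n in szX lcX.
have szp' : (size (p - c%:P * iter n smulX ('X - b%:P))%R <= n.+1)%N.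
  apply/leq_sizeP => j; rewrite leq_eqVlt coefB coefCM => /orP[/eqP <-|hj].
    by rewrite lcX mulr1 subrr.
  by rewrite !nth_default ?mulr0 ?subrr // (leq_trans _ hj).
have [Q [d hQ]] := IH _ szp'.
by exists (c%:P * 'X^n + Q), d; rewrite smulDl smul_monomial -addrA -hQ addrC subrK.
Qed.

Lemma rdvd_XsubC_peval b p :
  skew_rdvd sigma delta ('X - b%:P) p <-> peval b p 1 = 0.
Proof.
have peval_XsubC Q : peval b (smul Q ('X - b%:P)) 1 = 0.
  by rewrite peval_mul pevalXsubC pl1 mulr1 subrr peval_y0.
split=> [[Q ->] //|pb0].
have [Q [c hQ]] := @skew_div_XsubC b (size p) p (leqnSn _).
exists Q; move: pb0; rewrite {1}hQ pevalD peval_XsubC add0r pevalC mulr1.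
by move=> c0; rewrite hQ c0 addr0.
Qed.

Lemma skew_Pseq_rcons s x :
  skew_Pseq sigma delta (rcons s x) = smul ('X - x%:P) (skew_Pseq sigma delta s).
Proof. by rewrite /skew_Pseq foldl_rcons. Qed.

Hypothesis hF : division_ring F.

Local Notation Pseq := (skew_Pseq sigma delta).

Definition sd_conj (c u : F) : F := pl c u * u^-1.

Lemma pl_conj c u y : u \is a GRing.unit -> pl (sd_conj c u) y = pl c (y * u) * u^-1.
Proof. by move=> uu; rewrite plM mulrDl mulrK // /sd_conj /pl mulrA. Qed.

Lemma peval_conj c u p y : u \is a GRing.unit ->
  peval (sd_conj c u) p y = peval c p (y * u) * u^-1.
Proof.
move=> uu; have iter_conj i : iter i (pl (sd_conj c u)) y = iter i (pl c) (y * u) * u^-1.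
  by elim: i => [|i IH] /=; rewrite ?mulrK // IH pl_conj // divrK.
by rewrite /peval mulr_suml; apply: eq_bigr => i _; rewrite iter_conj mulrA.
Qed.

Lemma sd_conj1 c : sd_conj c 1 = c.
Proof. by rewrite /sd_conj invr1 mulr1 pl1. Qed.

Lemma sd_conjM c u v : u \is a GRing.unit -> v \is a GRing.unit ->
  sd_conj (sd_conj c u) v = sd_conj c (v * u).
Proof. by move=> uu vu; rewrite /sd_conj pl_conj // invrM // mulrA. Qed.

Variable a : F.
Local Notation Ka := (sd_centralizer sigma delta a).

Lemma Ka0 : Ka 0.
Proof. by rewrite /sd_centralizer rmorph0 mul0r delta0 addr0 mulr0. Qed.

Lemma Ka1 : Ka 1.
Proof. by rewrite /sd_centralizer rmorph1 mul1r delta1 addr0 mulr1. Qed.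

Lemma KaD x y : Ka x -> Ka y -> Ka (x + y).
Proof.
by rewrite /sd_centralizer => hx hy; rewrite rmorphD deltaD mulrDl addrACA hx hy mulrDr.
Qed.

Lemma KaN x : Ka x -> Ka (- x).
Proof.
rewrite /sd_centralizer => hx; rewrite rmorphN mulNr mulrN -hx opprD; congr (_ + _).
by apply: (addrI (delta x)); rewrite -deltaD !subrr delta0.
Qed.

Lemma KaM x y : Ka x -> Ka y -> Ka (x * y).
Proof.
rewrite /sd_centralizer => hx hy.
by rewrite rmorphM deltaM -mulrA addrA -mulrDr hy mulrA -mulrDl hx mulrA.
Qed.

Lemma KaV x : Ka x -> x != 0 -> Ka x^-1.
Proof.
rewrite /sd_centralizer => hx nx; have xu := hF nx.
apply: (@mulrI _ (sigma x)); first by rewrite rmorph_unit.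
have sx_dxV : sigma x * delta x^-1 = - (delta x * x^-1).
  by apply/eqP; rewrite -addr_eq0 -deltaM mulrV // delta1.
have sxa : sigma x * a = a * x - delta x by rewrite -hx addrK.
by rewrite mulrDr mulrA -rmorphM mulrV // rmorph1 mul1r sx_dxV mulrA sxa mulrBl mulrK.
Qed.

Lemma peval_rlinear p y b : Ka b -> peval a p (y * b) = peval a p y * b.
Proof.
rewrite /sd_centralizer => hb.
have pl_rlinear z : pl a (z * b) = pl a z * b.
  by rewrite /pl rmorphM deltaM -mulrA addrA -mulrDr hb mulrA -mulrDl.
have iter_rlinear j : iter j (pl a) (y * b) = iter j (pl a) y * b.
  by elim: j => //= j ->; rewrite pl_rlinear.
by rewrite /peval mulr_suml; apply: eq_bigr => i _; rewrite iter_rlinear mulrA.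
Qed.

Definition unique_root (s : seq F) : Prop :=
  forall b, peval b (Pseq s) 1 = 0 <-> b = a.

Hypothesis hfin : right_findim_over_centralizer sigma delta a.

(* Since P_s(T_a) kills 1, it is not onto F: pick g outside its image. *)
Lemma exists_nonvalue s : unique_root s -> exists g, forall d, peval a (Pseq s) d <> g.
Proof.
move=> ur; have [n [e he]] := hfin.
have nsurj := @not_surjective_of_kernel F hF Ka Ka0 Ka1 KaD KaN KaM KaV n e
  (peval a (Pseq s)) he (peval_yD a _) (@peval_rlinear _) (proj2 (ur a) erefl).
have [g /not_ex_all_not ng] := not_all_ex_not _ _ nsurj.
by exists g.
Qed.

Lemma unique_root_rcons s g : unique_root s ->
  (forall d, peval a (Pseq s) d <> g) -> unique_root (rcons s (sd_conj a g)).
Proof.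
move=> ur ng b; rewrite skew_Pseq_rcons peval_mul pevalXsubC.
split=> [root_b|->]; last by rewrite (proj2 (ur a) erefl) pl0 mulr0 subrr.
set c := peval b (Pseq s) 1 in root_b *.
have gu : g \is a GRing.unit.
  by apply: hF; apply/eqP => g0; apply: (ng 0); rewrite peval_y0 g0.
have [/ur //|cn] := eqVneq c 0; exfalso; have cu := hF cn.
have conj_bc : sd_conj b c = sd_conj a g.
  by move/eqP: root_b; rewrite subr_eq0 /sd_conj => /eqP ->; rewrite mulrK.
(* then b = a^u with u = c^-1 g, and evaluating at T_(a^u) shows P_s(T_a)(u) = g *)
have uu : c^-1 * g \is a GRing.unit by rewrite unitrMl ?unitrV.
have b_conj : b = sd_conj a (c^-1 * g).
  by rewrite -[b]sd_conj1 -(mulVr cu) -sd_conjM ?unitrV // conj_bc sd_conjM ?unitrV.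
have c_val : c = peval a (Pseq s) (c^-1 * g) * (c^-1 * g)^-1.
  by rewrite {1}/c b_conj peval_conj // mul1r.
by apply: (ng (c^-1 * g)); rewrite -[LHS](divrK uu) -c_val mulrA divrr // mul1r.
Qed.

Lemma exists_unique_root_seq k :
  exists s, size s = k.+1 /\ head 0 s = a /\ unique_root s.
Proof.
elim: k => [|k [s [szs [hs ur]]]].
  exists [:: a]; split=> //; split=> // b.
  rewrite /skew_Pseq /= peval_mul -polyC1 pevalC mulr1 pevalXsubC pl1 mulr1.
  by split=> [/eqP|->]; rewrite ?subrr // subr_eq0 => /eqP.
have [g ng] := exists_nonvalue ur.
exists (rcons s (sd_conj a g)); split; first by rewrite size_rcons szs.
by split; [case: s szs hs {ur ng} | exact: unique_root_rcons].
Qed.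

Lemma unique_root_multiplicity s :
  head 0 s = a -> unique_root s -> multiplicity_seq sigma delta s.
Proof.
move=> hs ur; rewrite /multiplicity_seq hs.
by split=> [|b]; rewrite rdvd_XsubC_peval; [apply/ur | move/ur].
Qed.
End SkewPolynomials.

Theorem mainTheorem14 (F : unitRingType) (sigma : {rmorphism F -> F})
  (delta : F -> F) (hF : division_ring F)
  (hdelta : sigma_derivation sigma delta) (a : F)
  (hfin : right_findim_over_centralizer sigma delta a) :
  forall r : nat, (0 < r)%N ->
    exists s : seq F, size s = r /\ head 0 s = a /\
      multiplicity_seq sigma delta s.
Proof.
case: hdelta => deltaD deltaM [|k] // _.
have [s [szs [hs ur]]] := exists_unique_root_seq deltaD deltaM hF hfin k.
by exists s; split=> //; split=> //; exact: (unique_root_multiplicity deltaD deltaM hs ur).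
Qed.
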